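(* The categories $\mathcal{VAR}$ and $\mathcal{MCA}$ are isomorphic. On objects, the isomorphism sends a variety $\mathcal V$ of $\tau$-algebras to the clone $\mathcal V$-algebra $\mathbf{Cl}(\mathcal V)$, with inverse sending a minimal clone $\tau$-algebra $\mathbf C=(\mathbf C_\tau,q_n^{\mathbf C},\mathsf e_i^{\mathbf C})$ to the variety $\mathrm{Var}(\mathbf C_\tau)$ generated by its $\tau$-reduct; one has $\mathcal V=\mathrm{Var}(\mathbf{Cl}(\mathcal V)_\tau)$ and $\mathbf C\cong\mathbf{Cl}(\mathrm{Var}(\mathbf C_\tau))$. Moreover, for varieties $\mathcal V,\mathcal W$ there is a bijective correspondence between the set $\mathrm{Hom}_{\mathcal{VAR}}(\mathcal V,\mathcal W)$ of interpretations of $\mathcal V$ into $\mathcal W$ and the set of pure homomorphisms from $\mathbf{Cl}(\mathcal V)$ to $\mathbf{Cl}(\mathcal W)$.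
   Context: A clone $\tau$-algebra is an algebra $\mathbf C=(C,\sigma^{\mathbf C}\ (\sigma\in\tau),q_n^{\mathbf C}\ (n\ge0),\mathsf e_i^{\mathbf C}\ (i\ge1))$ with $\mathsf e_i$ nullary, $q_n$ of arity $n+1$, satisfying: (C1) $q_n(\mathsf e_i,x_1,\dots,x_n)=x_i$ ($1\le i\le n$); (C2) $q_n(\mathsf e_j,x_1,\dots,x_n)=\mathsf e_j$ ($j>n$); (C3) $q_n(x,\mathsf e_1,\dots,\mathsf e_n)=x$; (C4) $q_k(x,y_1,\dots,y_k)=q_n(x,y_1,\dots,y_k,\mathsf e_{k+1},\dots,\mathsf e_n)$ ($n>k$); (C5) $q_n(q_n(x,\mathbf y),\mathbf z)=q_n(x,q_n(y_1,\mathbf z),\dots,q_n(y_n,\mathbf z))$; (C6) $q_n(\sigma(x_1,\dots,x_k),\mathbf y)=\sigma(q_n(x_1,\mathbf y),\dots,q_n(x_k,\mathbf y))$ for $\sigma\in\tau$ of arity $k$. It is minimal if $C$ is the smallest subset containing all $\mathsf e_i^{\mathbf C}$ and closed under all $\sigma^{\mathbf C}$. A pure homomorphism between clone algebras (possibly of different types) is a map preserving all $\mathsf e_i$ and all $q_n$. $\mathcal{MCA}$ is the category whose objects are minimal clone algebras of arbitrary types and whose arrows are pure homomorphisms. For a variety $\mathcal V$ of $\tau$-algebras with free algebra $\mathbf F_{\mathcal V}$ over $\{v_1,v_2,\dots\}$, $\mathbf{Cl}(\mathcal V)=(\mathbf F_{\mathcal V},q_n^{\mathbf F},\mathsf e_i^{\mathbf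 F})$ with $\mathsf e_i^{\mathbf F}=v_i$ and $q_n^{\mathbf F}(a,b_1,\dots,b_n)=s(a)$, $s$ the unique endomorphism with $s(v_i)=b_i$ ($i\le n$), $s(v_i)=v_i$ ($i>n$). An interpretation of a variety $\mathcal V$ of type $\tau$ into a variety $\mathcal W$ of type $\nu$ is a map $f$ on $\tau$ such that: for $\sigma\in\tau$ of arity $n>0$, $f(\sigma)$ is a $\nu$-term in the variables $v_1,\dots,v_n$; for nullary $\sigma$, $f(\sigma)$ is a $\nu$-term $t(v_1)$ with $\mathcal W\models t(v_1)=t(v_2)$; and for every $\mathbf A\in\mathcal W$, the $\tau$-algebra $\mathbf A^f$ on $A$ interpreting each $\sigma$ as the term operation of $f(\sigma)$ in $\mathbf A$ belongs to $\mathcal V$. $\mathcal{VAR}$ is the category whose objects are varieties of algebras (of arbitrary types) and whose arrows are interpretations (composed by substituting terms for operation symbols). *)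

From mathcomp Require Import all_boot.
From Stdlib Require Import ClassicalEpsilon.
Set Implicit Arguments. Unset Strict Implicit. Unset Printing Implicit Defensive.

(* Conventions: variables and projections are indexed from 0:
   Var i / ca_e i stand for v_(i+1) / e_(i+1) of the paper, and
   q_n takes its n extra arguments as a function 'I_n -> C. *)

Record signature := Sig { op :> Type; arity : op -> nat }.

Inductive term (s : signature) : Type :=
| Var : nat -> term s
| App : forall o : s, ('I_(arity o) -> term s) -> term s.
Arguments Var {s} _.
Arguments App {s} o _.

Definition tup_ext (A : Type) (n : nat) (y : 'I_n -> A) (d : nat -> A) : nat -> A :=
  fun i => if (insub i : option 'I_n) is Some j then y j else d i.

Fixpoint subst s (sg : nat -> term s) (t : term s) : term s :=
  match t with
  | Var i => sg i
  | App o ts => App o (fun j => @subst s sg (ts j))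
  end.

Fixpoint vars_below s (n : nat) (t : term s) : Prop :=
  match t with
  | Var i => i < n
  | App o ts => forall j, @vars_below s n (ts j)
  end.

Record algebra (s : signature) := Alg {
  carrier :> Type;
  interp : forall o : s, ('I_(arity o) -> carrier) -> carrier;
  alg_nonempty : inhabited carrier }.
Arguments interp {s} a o _.

Fixpoint eval s (A : algebra s) (v : nat -> A) (t : term s) : A :=
  match t with
  | Var i => v i
  | App o ts => interp A o (fun j => @eval s A v (ts j))
  end.
Arguments eval {s} A v t.

Definition satisfies s (A : algebra s) (t u : term s) : Prop :=
  forall v : nat -> A, eval A v t = eval A v u.

Definition Mod s (E : term s -> term s -> Prop) : algebra s -> Prop :=
  fun A => forall t u, E t u -> satisfies A t u.

Definition is_variety s (K : algebra s -> Prop) : Prop :=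
  exists E : term s -> term s -> Prop, forall A, K A <-> Mod E A.

Record variety (s : signature) := Variety {
  vclass :> algebra s -> Prop;
  vclass_variety : is_variety vclass }.

Definition veq s (V : algebra s -> Prop) (t u : term s) : Prop :=
  forall A, V A -> satisfies A t u.

(* Var(A): the variety generated by A, i.e. the models of all identities of A *)
Definition Id s (A : algebra s) : term s -> term s -> Prop := fun t u => satisfies A t u.

Lemma VarOf_variety s (A : algebra s) : is_variety (Mod (Id A)).
Proof. by exists (Id A). Qed.

Definition VarOf s (A : algebra s) : variety s := Variety (VarOf_variety A).

Record clone_algebra (s : signature) := CloneAlg {
  ca_alg :> algebra s;
  ca_q : forall n : nat, ca_alg -> ('I_n -> ca_alg) -> ca_alg;
  ca_e : nat -> ca_alg }.
Arguments ca_q {s} c n _ _.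
Arguments ca_e {s} c _.

Definition clone_axioms s (C : clone_algebra s) : Prop :=
  let q := ca_q C in let e := ca_e C in
  (forall n (i : 'I_n) y, q n (e i) y = y i) /\
  (forall n j y, n <= j -> q n (e j) y = e j) /\
  (forall n x, q n x (fun i : 'I_n => e i) = x) /\
  (forall k n x (y : 'I_k -> C), k < n ->
                 q k x y = q n x (fun i : 'I_n => tup_ext y e i)) /\
  (forall n x (y z : 'I_n -> C),
                 q n (q n x y) z = q n x (fun i => q n (y i) z)) /\
  ( forall n (o : s) (xs : 'I_(arity o) -> C) (y : 'I_n -> C),
                 q n (interp C o xs) y = interp C o (fun j => q n (xs j) y)).

Definition minimal s (C : clone_algebra s) : Prop :=
  forall P : C -> Prop,
    (forall i, P (ca_e C i)) ->
    (forall (o : s) (xs : 'I_(arity o) -> C), (forall j, P (xs j)) -> P (interp C o xs)) ->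
    forall x, P x.

Definition is_pure_hom s s' (C : clone_algebra s) (D : clone_algebra s') (h : C -> D) : Prop :=
  (forall i, h (ca_e C i) = ca_e D i) /\
  (forall n (x : C) (y : 'I_n -> C), h (ca_q C n x y) = ca_q D n (h x) (fun i => h (y i))).

Definition clone_iso s (C D : clone_algebra s) (h : C -> D) : Prop :=
  [/\ bijective h,
      forall (o : s) (xs : 'I_(arity o) -> C), h (interp C o xs) = interp D o (fun j => h (xs j))
    & is_pure_hom h].

Definition FV s (V : variety s) : Type := {c : term s -> Prop | exists t, c = veq V t}.

Definition cls s (V : variety s) (t : term s) : FV V := exist _ (veq V t) (ex_intro _ t erefl).

Definition rep s (V : variety s) (c : FV V) : term s :=
  proj1_sig (constructive_indefinite_description _ (proj2_sig c)).

Definition FAlg s (V : variety s) : algebra s :=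
  @Alg s (FV V) (fun o xs => cls V (App o (fun j => rep (xs j)))) (inhabits (cls V (Var 0))).

Definition Cl s (V : variety s) : clone_algebra s :=
  @CloneAlg s (FAlg V)
    (fun n a b => cls V (subst (tup_ext (fun j => rep (b j)) Var) (rep a)))
    (fun i => cls V (Var i)).

Fixpoint translate (s s' : signature) (f : forall o : s, term s') (t : term s) : term s' :=
  match t with
  | Var i => Var i
  | App o ts => subst (tup_ext (fun j => @translate s s' f (ts j)) Var) (f o)
  end.

Definition dflt s (A : algebra s) : A := epsilon (alg_nonempty A) (fun _ => True).

Definition reduct (s s' : signature) (f : forall o : s, term s') (A : algebra s') : algebra s :=
  @Alg s A (fun o xs => eval A (tup_ext xs (fun _ => dflt A)) (f o)) (alg_nonempty A).

Definition is_interp s s' (V : variety s) (W : variety s') (f : forall o : s, term s') : Prop :=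
  [/\ forall o : s, 0 < arity o -> vars_below (arity o) (f o),
      forall o : s, arity o = 0 ->
        vars_below 1 (f o) /\ veq W (f o) (subst (fun _ => Var 1) (f o))
    & forall A, W A -> V (reduct f A)].

Definition interp_equiv s s' (W : variety s') (f g : forall o : s, term s') : Prop :=
  forall o, veq W (f o) (g o).

Definition id_interp (s : signature) : forall o : s, term s :=
  fun o => App o (fun j => Var j).

Definition comp_interp (s s' s'' : signature) (g : forall o : s', term s'')
  (f : forall o : s, term s') : forall o : s, term s'' :=
  fun o => translate g (f o).

From mathcomp Require Import all_boot.
From Stdlib Require Import FunctionalExtensionality PropExtensionality ProofIrrelevance.
From Stdlib Require Import ClassicalEpsilon.
Set Implicit Arguments. Unset Strict Implicit. Unset Printing Implicit Defensive.

(* Cl(V) is the algebra of terms modulo the identities of V, in which q_n substitutes for the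
   first n variables: the clone axioms are the laws of substitution, and Var(Cl(V)) = V since
   this free algebra satisfies exactly the identities of V.  In a minimal clone algebra C every
   element is a value t(e_1, e_2, ...), and q_n turns it into t(c_1, ..., c_n, e_(n+1), ...);
   so terms with equal values at the e_i are identities of C, and t(e) |-> [t] is an
   isomorphism onto Cl(Var(C)).
   An interpretation f acts on terms by translation, which commutes with substitution modulo W
   and hence induces a pure homomorphism; that map only depends on the classes of the images
   f(o) of the generic elements o(v_1, ..., v_n).  Conversely, every element of Cl(V) is q_n
   applied to a generic element, so a pure homomorphism h is induced by
   o |-> h(o(v_1, ..., v_n)). *)

Section TupleExtension.
Variables (A : Type) (n : nat).

Lemma tup_ext_ord (y : 'I_n -> A) d (j : 'I_n) : tup_ext y d j = y j.
Proof. by rewrite /tup_ext; case: insubP => [k _ /val_inj -> //|]; rewrite /= ltn_ord. Qed.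

Lemma tup_ext_ge (y : 'I_n -> A) d i : n <= i -> tup_ext y d i = d i.
Proof.
by move=> le_ni; rewrite /tup_ext; case: insubP => [k _ ki|//]; rewrite -ki leqNgt ltn_ord in le_ni.
Qed.

Lemma tup_ext_rel (B : Type) (R : A -> B -> Prop) (y : 'I_n -> A) (y' : 'I_n -> B) d d' i :
  (forall j, R (y j) (y' j)) -> (forall i, R (d i) (d' i)) -> R (tup_ext y d i) (tup_ext y' d' i).
Proof. by move=> Ry Rd; rewrite /tup_ext; case: insubP. Qed.

Lemma tup_ext_map (B : Type) (F : A -> B) (y : 'I_n -> A) d i :
  F (tup_ext y d i) = tup_ext (fun j => F (y j)) (fun i => F (d i)) i.
Proof. exact: (@tup_ext_rel _ (fun a b => F a = b)). Qed.

Lemma tup_ext_self (d : nat -> A) i : tup_ext (fun j : 'I_n => d j) d i = d i.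
Proof. by rewrite /tup_ext; case: insubP => [j _ ->|]. Qed.

End TupleExtension.

Lemma tup_ext_widen (A : Type) n k (y : 'I_k -> A) d i :
  k <= n -> tup_ext (fun j : 'I_n => tup_ext y d j) d i = tup_ext y d i.
Proof.
move=> le_kn; case: (ltnP i n) => [lt_in | le_ni].
  by rewrite (tup_ext_ord _ _ (Ordinal lt_in)).
by rewrite !tup_ext_ge // (leq_trans le_kn le_ni).
Qed.

Section Terms.
Variable s : signature.
Implicit Types (t u : term s) (sg : nat -> term s).

Lemma eval_subst (A : algebra s) v sg t :
  eval A v (subst sg t) = eval A (fun i => eval A v (sg i)) t.
Proof.
elim: t => [i|o ts IH] //=; congr (interp A o _).
by apply: functional_extensionality => j; exact: IH.
Qed.

Lemma subst_comp sg1 sg2 t : subst sg2 (subst sg1 t) = subst (fun i => subst sg2 (sg1 i)) t.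
Proof.
elim: t => [i|o ts IH] //=; congr (App o _).
by apply: functional_extensionality => j; exact: IH.
Qed.

Lemma subst_Var t : subst Var t = t.
Proof.
elim: t => [i|o ts IH] //=; congr (App o _).
by apply: functional_extensionality => j; exact: IH.
Qed.

Lemma vars_below_leq m n t : m <= n -> vars_below m t -> vars_below n t.
Proof. by move=> le_mn; elim: t => [i /leq_trans|o ts IH /= ? j]; [apply | apply: IH]. Qed.

Lemma vars_below_subst m sg t : (forall i, vars_below m (sg i)) -> vars_below m (subst sg t).
Proof. by move=> Hsg; elim: t => [i|o ts IH] //=. Qed.

Fixpoint var_bound t : nat :=
  match t with Var i => i.+1 | App o ts => \max_(j < arity o) var_bound (ts j) end.

Lemma vars_below_bound t : vars_below (var_bound t) t.
Proof.
elim: t => [i|o ts IH] //= j; apply: vars_below_leq (IH j).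
exact: (@leq_bigmax _ (fun j => var_bound (ts j)) j).
Qed.

Lemma eq_subst_below n sg sg' t :
  vars_below n t -> (forall i, i < n -> sg i = sg' i) -> subst sg t = subst sg' t.
Proof.
move=> + Hsg; elim: t => [i /Hsg //|o ts IH /= Hts]; congr (App o _).
by apply: functional_extensionality => j; exact: IH.
Qed.

Lemma eq_eval_below (A : algebra s) n v w t :
  vars_below n t -> (forall i, i < n -> v i = w i) -> eval A v t = eval A w t.
Proof.
move=> + Hvw; elim: t => [i /Hvw //|o ts IH /= Hts]; congr (interp A o _).
by apply: functional_extensionality => j; exact: IH.
Qed.

Lemma veq_VarOf (A : algebra s) t u : veq (VarOf A) t u <-> satisfies A t u.
Proof. by split=> [|Htu B]; [apply | apply]. Qed.

End Terms.

Section FreeAlgebra.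
Variables (s : signature) (V : variety s).
Implicit Types (t u : term s) (sg : nat -> term s).

Lemma veq_refl t : veq V t t. Proof. by []. Qed.

Lemma veq_sym t u : veq V t u -> veq V u t.
Proof. by move=> Htu A VA v; rewrite Htu. Qed.

Lemma veq_trans t u w : veq V t u -> veq V u w -> veq V t w.
Proof. by move=> Htu Huw A VA v; rewrite Htu // Huw. Qed.

Lemma veq_App o (ts us : 'I_(arity o) -> term s) :
  (forall j, veq V (ts j) (us j)) -> veq V (App o ts) (App o us).
Proof.
move=> Htsus A VA v /=; congr (interp A o _).
by apply: functional_extensionality => j; exact: Htsus.
Qed.

Lemma veq_subst t u sg sg' :
  veq V t u -> (forall i, veq V (sg i) (sg' i)) -> veq V (subst sg t) (subst sg' u).
Proof.
move=> Htu Hsg A VA v; rewrite !eval_subst Htu //; congr (eval A _ u).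
by apply: functional_extensionality => i; exact: Hsg.
Qed.

Lemma cls_eq t u : cls V t = cls V u <-> veq V t u.
Proof.
split=> [/(congr1 (@proj1_sig _ _)) /= -> //|Htu].
apply: subset_eq_compat; apply: functional_extensionality => w.
by apply: propositional_extensionality; split; apply: veq_trans; [apply: veq_sym|].
Qed.

Lemma cls_rep (c : FV V) : cls V (rep c) = c.
Proof.
case: c => p Hp; apply: subset_eq_compat; rewrite /rep /=.
by case: constructive_indefinite_description.
Qed.

Lemma rep_cls t : veq V (rep (cls V t)) t.
Proof. by apply/cls_eq; rewrite cls_rep. Qed.

Lemma cls_surj (c : FV V) : exists t, c = cls V t.
Proof. by exists (rep c); rewrite cls_rep. Qed.

Lemma cls_fun_surj (I : Type) (y : I -> FV V) : exists ts, y = fun i => cls V (ts i).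
Proof. by exists (fun i => rep (y i)); apply: functional_extensionality => i; rewrite cls_rep. Qed.

Lemma interp_cls o (ts : 'I_(arity o) -> term s) :
  interp (FAlg V) o (fun j => cls V (ts j)) = cls V (App o ts).
Proof. by apply/cls_eq; apply: veq_App => j; exact: rep_cls. Qed.

Lemma q_cls n t (us : 'I_n -> term s) :
  ca_q (Cl V) n (cls V t) (fun i => cls V (us i)) = cls V (subst (tup_ext us Var) t).
Proof.
apply/cls_eq; apply: veq_subst => [|i]; first exact: rep_cls.
by apply: tup_ext_rel => [j|k]; [exact: rep_cls | exact: veq_refl].
Qed.

Lemma q_id_interp o (ts : 'I_(arity o) -> term s) :
  ca_q (Cl V) (arity o) (cls V (id_interp o)) (fun j => cls V (ts j)) = cls V (App o ts).
Proof.
rewrite q_cls /=; congr (cls V (App o _)).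
by apply: functional_extensionality => j; rewrite tup_ext_ord.
Qed.

Lemma eval_FAlg v t : eval (FAlg V) v t = cls V (subst (fun i => rep (v i)) t).
Proof.
elim: t => [i|o ts IH] /=; first by rewrite cls_rep.
by apply/cls_eq; apply: veq_App => j; rewrite IH; exact: rep_cls.
Qed.

Lemma satisfies_FAlg t u : satisfies (FAlg V) t u <-> veq V t u.
Proof.
split=> [Htu|Htu v]; last by rewrite !eval_FAlg; apply/cls_eq; apply: veq_subst.
have := Htu (fun i => cls V (Var i)); rewrite !eval_FAlg => /cls_eq Hsub.
have rv i : veq V (Var i) (rep (cls V (Var i))) by apply/veq_sym/rep_cls.
rewrite -(subst_Var t) -(subst_Var u).
apply: veq_trans (veq_subst (veq_refl t) rv) (veq_trans Hsub _).
by apply: veq_subst => // i; apply/veq_sym.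
Qed.

Lemma Cl_clone_axioms : clone_axioms (Cl V).
Proof.
split; [|split; [|split; [|split; [|split]]]].
- move=> n i y; have [us ->] := cls_fun_surj y.
  by rewrite (q_cls (Var i)) /= tup_ext_ord.
- move=> n j y le_nj; have [us ->] := cls_fun_surj y.
  by rewrite (q_cls (Var j)) /= tup_ext_ge.
- move=> n x; have [t ->] := cls_surj x.
  rewrite (q_cls t (fun i => Var i)); congr (cls V _).
  rewrite -[RHS]subst_Var; congr subst.
  by apply: functional_extensionality => i; exact: tup_ext_self.
- move=> k n x y lt_kn; have [t ->] := cls_surj x; have [us ->] := cls_fun_surj y.
  have -> : (fun i : 'I_n => tup_ext (fun j => cls V (us j)) (ca_e (Cl V)) i)
          = (fun i : 'I_n => cls V (tup_ext us Var i)).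
    by apply: functional_extensionality => i; rewrite (tup_ext_map (cls V)).
  rewrite !q_cls; congr (cls V (subst _ t)).
  by apply: functional_extensionality => i; rewrite tup_ext_widen // ltnW.
- move=> n x y z; have [t ->] := cls_surj x; have [us ->] := cls_fun_surj y.
  have [ws ->] := cls_fun_surj z.
  have -> : (fun i => ca_q (Cl V) n (cls V (us i)) (fun i => cls V (ws i)))
          = (fun i => cls V (subst (tup_ext ws Var) (us i))).
    by apply: functional_extensionality => i; rewrite q_cls.
  rewrite !q_cls subst_comp; congr (cls V (subst _ t)).
  apply: functional_extensionality => i; case: (ltnP i n) => [lt_in | le_ni].
    by rewrite !(tup_ext_ord _ _ (Ordinal lt_in)).
  by rewrite (tup_ext_ge _ _ le_ni) /= !tup_ext_ge.
- move=> n o xs y; have [ts ->] := cls_fun_surj xs; have [us ->] := cls_fun_surj y.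
  have -> : (fun j => ca_q (Cl V) n (cls V (ts j)) (fun i => cls V (us i)))
          = (fun j => cls V (subst (tup_ext us Var) (ts j))).
    by apply: functional_extensionality => j; rewrite q_cls.
  by rewrite interp_cls q_cls interp_cls.
Qed.

Lemma Cl_minimal : minimal (Cl V).
Proof.
move=> P Pe Pinterp x; have [t ->] := cls_surj x.
elim: t => [i|o ts IH]; first exact: Pe.
by rewrite -interp_cls; exact: Pinterp.
Qed.

Lemma VarOf_Cl A : VarOf (Cl V) A <-> V A.
Proof.
have [E VE] := vclass_variety V; split=> [HA|VA t u /satisfies_FAlg Htu]; last exact: Htu.
by apply/VE => t u Etu; apply/HA/satisfies_FAlg => B /VE; apply.
Qed.

End FreeAlgebra.

Definition respects_arity (s s' : signature) (W : variety s') (f : forall o : s, term s') :=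
  forall (o : s) (A : algebra s'), W A -> forall v w : nat -> A,
    (forall i, i < arity o -> v i = w i) -> eval A v (f o) = eval A w (f o).

Lemma eval_const_term s (W : variety s) (A : algebra s) (t : term s) v w :
  W A -> vars_below 1 t -> veq W t (subst (fun _ => Var 1) t) -> eval A v t = eval A w t.
Proof.
move=> WA t_unary t_const.
have eval_diag (u : nat -> A) : eval A u t = eval A (fun _ => u 1) t.
  by rewrite t_const // eval_subst.
pose u i := if i is 0 then v 0 else w i.
by rewrite (@eq_eval_below _ _ 1 v u) //; [rewrite eval_diag [RHS]eval_diag | case].
Qed.

Section Translation.
Variables (s s' : signature) (W : variety s') (f : forall o : s, term s').

Lemma respects_arity_of_syntax :
  (forall o : s, 0 < arity o -> vars_below (arity o) (f o)) ->
  (forall o : s, arity o = 0 -> vars_below 1 (f o) /\ veq W (f o) (subst (fun _ => Var 1) (f o))) ->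
  respects_arity W f.
Proof.
move=> f_pos f_const o A WA v w Hvw.
case: (posnP (arity o)) => [/f_const [f_unary f_indep] | /f_pos f_below].
  exact: eval_const_term WA f_unary f_indep.
exact: eq_eval_below f_below Hvw.
Qed.

Lemma interp_respects_arity (V : variety s) : is_interp V W f -> respects_arity W f.
Proof. by case=> f_pos f_const _; exact: respects_arity_of_syntax. Qed.

Lemma translate_id_interp o : translate f (id_interp o) = f o.
Proof.
rewrite /= -[RHS]subst_Var; congr subst.
by apply: functional_extensionality => i; exact: tup_ext_self.
Qed.

Hypothesis f_arity : respects_arity W f.

Lemma eval_translate (A : algebra s') v t : W A -> eval A v (translate f t) = eval (reduct f A) v t.
Proof.
move=> WA; elim: t => [i|o ts IH] //=; rewrite eval_subst; apply: f_arity => // i lt_io.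
by rewrite !(tup_ext_ord _ _ (Ordinal lt_io)) IH.
Qed.

Lemma translate_subst sg t :
  veq W (translate f (subst sg t)) (subst (fun i => translate f (sg i)) (translate f t)).
Proof.
move=> A WA v; rewrite eval_subst !eval_translate // eval_subst; congr (eval (reduct f A) _ t).
by apply: functional_extensionality => i; rewrite eval_translate.
Qed.

Lemma reduct_in_variety (V : variety s) :
  (forall t u, veq V t u -> veq W (translate f t) (translate f u)) ->
  forall A, W A -> V (reduct f A).
Proof.
move=> f_veq A WA; have [E VE] := vclass_variety V; apply/VE => t u Etu v.
rewrite -!eval_translate //; apply: f_veq WA v => B /VE; exact.
Qed.

End Translation.

Lemma translate_veq s s' (V : variety s) (W : variety s') f t u :
  is_interp V W f -> veq V t u -> veq W (translate f t) (translate f u).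
Proof.
move=> Hf Htu A WA v; have [_ _ f_red] := Hf.
by rewrite !(eval_translate (interp_respects_arity Hf)) //; exact: Htu _ (f_red _ WA) v.
Qed.

Definition Cl_hom (s s' : signature) (V : variety s) (W : variety s')
  (f : forall o : s, term s') (c : Cl V) : Cl W := cls W (translate f (rep c)).
Arguments Cl_hom {s s'} V W f c.

Section ClHom.
Variables (s s' : signature) (V : variety s) (W : variety s').

Lemma Cl_hom_cls f t : is_interp V W f -> Cl_hom V W f (cls V t) = cls W (translate f t).
Proof. by move=> Hf; apply/cls_eq; apply: translate_veq Hf _; exact: rep_cls. Qed.

Lemma Cl_hom_pure f : is_interp V W f -> is_pure_hom (Cl_hom V W f).
Proof.
move=> Hf; split=> [i|n x y]; first exact: Cl_hom_cls (Var i) Hf.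
have [t ->] := cls_surj x; have [us ->] := cls_fun_surj y.
have -> : (fun i => Cl_hom V W f (cls V (us i))) = (fun i => cls W (translate f (us i))).
  by apply: functional_extensionality => i; rewrite Cl_hom_cls.
rewrite q_cls !Cl_hom_cls // q_cls; apply/cls_eq.
apply: veq_trans (translate_subst (interp_respects_arity Hf) _ _) _.
by apply: veq_subst => // i; rewrite (tup_ext_map (translate f)).
Qed.

Lemma eval_reduct_equiv (f g : forall o : s, term s') (A : algebra s') v t :
  interp_equiv W f g -> W A -> eval (reduct f A) v t = eval (reduct g A) v t.
Proof.
move=> fg WA; elim: t => [i|o ts IH] //=.
rewrite (fg o A WA); congr (eval A (tup_ext _ _) (g o)).
by apply: functional_extensionality.
Qed.

Lemma Cl_hom_inj f g : is_interp V W f -> is_interp V W g ->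
  Cl_hom V W f = Cl_hom V W g <-> interp_equiv W f g.
Proof.
move=> Hf Hg; split=> [fg o | fg].
  move: (congr1 (fun F => F (cls V (id_interp o))) fg).
  by rewrite /= !Cl_hom_cls // !translate_id_interp => /cls_eq.
apply: functional_extensionality => c; apply/cls_eq => A WA v.
rewrite (eval_translate (interp_respects_arity Hf)) //.
by rewrite (eval_translate (interp_respects_arity Hg)) //; exact: eval_reduct_equiv.
Qed.

End ClHom.

Lemma translate_id s (t : term s) : translate (@id_interp s) t = t.
Proof.
elim: t => [i|o ts IH] //=; congr (App o _).
by apply: functional_extensionality => j; rewrite tup_ext_ord IH.
Qed.

Lemma Cl_hom_id s (V : variety s) : Cl_hom V V (@id_interp s) = id.
Proof. by apply: functional_extensionality => c; rewrite /Cl_hom translate_id cls_rep. Qed.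

Lemma translate_comp (s s' s'' : signature) (U : variety s'') (f : forall o : s, term s')
    (g : forall o : s', term s'') t :
  respects_arity U g -> veq U (translate (comp_interp g f) t) (translate g (translate f t)).
Proof.
move=> g_arity; elim: t => [i|o ts IH] /=; first exact: veq_refl.
apply: veq_sym; apply: veq_trans (translate_subst g_arity _ _) _.
apply: veq_subst => [|i]; first exact: veq_refl.
rewrite (tup_ext_map (translate g)).
by apply: tup_ext_rel => [j|k]; [apply: veq_sym | apply: veq_refl].
Qed.

Lemma Cl_hom_comp s s' s'' (V : variety s) (W : variety s') (U : variety s'') f g :
  is_interp V W f -> is_interp W U g ->
  Cl_hom V U (comp_interp g f) = Cl_hom W U g \o Cl_hom V W f.
Proof.
move=> Hf Hg; apply: functional_extensionality => c; have [t ->] := cls_surj c.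
rewrite /= (Cl_hom_cls _ Hf) (Cl_hom_cls _ Hg) {1}/Cl_hom; apply/cls_eq.
apply: veq_trans (translate_comp _ _ (interp_respects_arity Hg)) _.
by apply: translate_veq Hg _; apply: translate_veq Hf _; exact: rep_cls.
Qed.

Section InterpretationOfPureHom.
Variables (s s' : signature) (V : variety s) (W : variety s') (h : Cl V -> Cl W).
Hypothesis h_pure : is_pure_hom h.

Definition generic_image (o : s) : term s' := rep (h (cls V (id_interp o))).

(* The generic element o(e_0, ..., e_(n-1)) is fixed by q_N applied to e_0, ..., e_(n-1),
   e_z, ..., e_z; taking N beyond the variables of its image, so is the image. *)
Lemma h_id_interp o z :
  h (cls V (id_interp o)) =
  cls W (subst (fun i => Var (if i < arity o then i else z)) (generic_image o)).
Proof.
have [h_e h_q] := h_pure; set c := cls V (id_interp o); set t := generic_image o.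
have hc : h c = cls W t by rewrite /t /generic_image cls_rep.
pose r i := if i < arity o then i else z; pose N := var_bound t + arity o.
have c_fixed : c = ca_q (Cl V) N c (fun i : 'I_N => cls V (Var (r i))).
  rewrite q_cls /=; congr (cls V (App o _)); apply: functional_extensionality => j.
  have lt_jN : j < N by apply: leq_trans (ltn_ord j) (leq_addl _ _).
  by rewrite (tup_ext_ord _ _ (Ordinal lt_jN)) /r /= ltn_ord.
rewrite {1}c_fixed h_q.
have -> : (fun i : 'I_N => h (cls V (Var (r i)))) = (fun i : 'I_N => cls W (Var (r i))).
  by apply: functional_extensionality => i; exact: h_e.
rewrite hc q_cls; congr (cls W _).
apply: (eq_subst_below (vars_below_leq (leq_addr (arity o) _) (vars_below_bound t))) => i lt_iN.
by rewrite (tup_ext_ord _ _ (Ordinal lt_iN)).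
Qed.

Definition interp_of_hom (o : s) : term s' :=
  subst (fun i => Var (if i < arity o then i else 0)) (generic_image o).

Lemma h_cls t : h (cls V t) = cls W (translate interp_of_hom t).
Proof.
have [h_e h_q] := h_pure; elim: t => [i|o ts IH]; first exact: h_e.
rewrite -q_id_interp h_q (h_id_interp o 0).
have -> : (fun j => h (cls V (ts j))) = (fun j => cls W (translate interp_of_hom (ts j))).
  by apply: functional_extensionality => j; exact: IH.
by rewrite q_cls.
Qed.

Lemma interp_of_hom_is_interp : is_interp V W interp_of_hom.
Proof.
have iof_pos o : 0 < arity o -> vars_below (arity o) (interp_of_hom o).
  by move=> o_pos; apply: vars_below_subst => i /=; case: ifP.
have iof_const o : arity o = 0 -> vars_below 1 (interp_of_hom o) /\
    veq W (interp_of_hom o) (subst (fun _ => Var 1) (interp_of_hom o)).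
  move=> o_const; split; first by apply: vars_below_subst => i /=; rewrite o_const.
  move: (h_id_interp o 1); rewrite (h_id_interp o 0) => /cls_eq.
  by rewrite /interp_of_hom subst_comp o_const.
split=> //; apply: reduct_in_variety (respects_arity_of_syntax iof_pos iof_const) V _.
by move=> t u /cls_eq tu; apply/cls_eq; rewrite -!h_cls tu.
Qed.

Lemma Cl_hom_interp_of_hom : Cl_hom V W interp_of_hom = h.
Proof. by apply: functional_extensionality => c; rewrite /Cl_hom -h_cls cls_rep. Qed.

End InterpretationOfPureHom.

Lemma Cl_hom_surj (s s' : signature) (V : variety s) (W : variety s') (h : Cl V -> Cl W) :
  is_pure_hom h -> exists f, is_interp V W f /\ Cl_hom V W f = h.
Proof.
move=> h_pure; exists (interp_of_hom h).
by split; [exact: interp_of_hom_is_interp | exact: Cl_hom_interp_of_hom].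
Qed.

Section MinimalCloneAlgebra.
Variables (s : signature) (C : clone_algebra s).
Hypotheses (C_clone : clone_axioms C) (C_min : minimal C).

Lemma q_eval n t (y : 'I_n -> C) : ca_q C n (eval C (ca_e C) t) y = eval C (tup_ext y (ca_e C)) t.
Proof.
have [C1 [C2 [_ [_ [_ C6]]]]] := C_clone.
elim: t => [i|o ts IH] /=.
  case: (ltnP i n) => [lt_in | le_ni]; last by rewrite C2 // tup_ext_ge.
  by rewrite (tup_ext_ord _ _ (Ordinal lt_in)); exact: (C1 n (Ordinal lt_in)).
rewrite C6; congr (interp C o _).
by apply: functional_extensionality => j; exact: IH.
Qed.

Lemma eval_e_surj (x : C) : exists t, eval C (ca_e C) t = x.
Proof.
move: x; apply: C_min => [i|o xs IH]; first by exists (Var i).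
have [ts Hts] : exists ts : 'I_(arity o) -> term s, forall j, eval C (ca_e C) (ts j) = xs j.
  exists (fun j => proj1_sig (constructive_indefinite_description _ (IH j))) => j.
  by case: constructive_indefinite_description.
exists (App o ts) => /=; congr (interp C o _).
by apply: functional_extensionality => j; exact: Hts.
Qed.

(* On the variables of t and u, any valuation v is the valuation e updated by q_n. *)
Lemma satisfies_of_eval_e t u : eval C (ca_e C) t = eval C (ca_e C) u -> satisfies C t u.
Proof.
move=> tu v; pose n := var_bound t + var_bound u.
have v_below i : i < n -> v i = tup_ext (fun j : 'I_n => v j) (ca_e C) i.
  by move=> lt_in; rewrite (tup_ext_ord _ _ (Ordinal lt_in)).
rewrite (eq_eval_below (vars_below_leq (leq_addr _ _) (vars_below_bound t)) v_below).
rewrite (eq_eval_below (vars_below_leq (leq_addl _ _) (vars_below_bound u)) v_below).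
by rewrite -!q_eval tu.
Qed.

Definition to_Cl (x : C) : Cl (VarOf C) :=
  cls (VarOf C) (proj1_sig (constructive_indefinite_description _ (eval_e_surj x))).

Lemma to_Cl_eval t x : eval C (ca_e C) t = x -> to_Cl x = cls (VarOf C) t.
Proof.
move=> tx; rewrite /to_Cl; case: constructive_indefinite_description => t' /= t'x.
by apply/cls_eq/veq_VarOf/satisfies_of_eval_e; rewrite t'x tx.
Qed.

Lemma eval_rep_to_Cl x : eval C (ca_e C) (rep (to_Cl x)) = x.
Proof.
have [t <-] := eval_e_surj x; rewrite (to_Cl_eval erefl).
by have /veq_VarOf := rep_cls (V := VarOf C) t; apply.
Qed.

Lemma to_Cl_iso : clone_iso to_Cl.
Proof.
split.
- exists (fun c : Cl (VarOf C) => eval C (ca_e C) (rep c)); first exact: eval_rep_to_Cl.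
  by move=> c; rewrite (to_Cl_eval erefl) cls_rep.
- move=> o xs; apply: to_Cl_eval => /=; congr (interp C o _).
  by apply: functional_extensionality => j; exact: eval_rep_to_Cl.
split=> [i|n x y]; first exact: to_Cl_eval.
apply: to_Cl_eval => /=; rewrite eval_subst -[in RHS](eval_rep_to_Cl x) q_eval.
congr (eval C _ _); apply: functional_extensionality => i.
by rewrite (tup_ext_map (eval C (ca_e C))); apply: tup_ext_rel => [j|k] /=; rewrite ?eval_rep_to_Cl.
Qed.

End MinimalCloneAlgebra.

Theorem theorem11p14 :
  (* object part, V |-> Cl(V) *)
  (forall (s : signature) (V : variety s),
      clone_axioms (Cl V) /\ minimal (Cl V) /\
      (forall A : algebra s, VarOf (Cl V) A <-> V A))
  /\
  (* object part, C |-> Var(C_tau) *)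
  (forall (s : signature) (C : clone_algebra s),
      clone_axioms C -> minimal C -> exists h, clone_iso (C := C) (D := Cl (VarOf C)) h)
  /\
  (* arrow part: a functorial bijection Hom_VAR(V,W) ~ pure homs Cl(V) -> Cl(W) *)
  (exists Phi : forall (s s' : signature) (V : variety s) (W : variety s'),
                  (forall o : s, term s') -> Cl V -> Cl W,
     [/\ forall s s' (V : variety s) (W : variety s') f,
           is_interp V W f -> is_pure_hom (Phi s s' V W f),
         forall s s' (V : variety s) (W : variety s') f g,
           is_interp V W f -> is_interp V W g ->
           (Phi s s' V W f = Phi s s' V W g <-> interp_equiv W f g),
         forall s s' (V : variety s) (W : variety s') (h : Cl V -> Cl W),
           is_pure_hom h -> exists f, is_interp V W f /\ Phi s s' V W f = h,
         forall s (V : variety s), Phi s s V V (@id_interp s) = id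
       & forall s s' s'' (V : variety s) (W : variety s') (U : variety s'') f g,
           is_interp V W f -> is_interp W U g ->
           Phi s s'' V U (comp_interp g f) = Phi s' s'' W U g \o Phi s s' V W f]).
Proof.
split=> [s V|].
  by split; [exact: Cl_clone_axioms | split; [exact: Cl_minimal | exact: VarOf_Cl]].
split=> [s C C_clone C_min|].
  by exists (to_Cl C_min); exact: to_Cl_iso.
exists @Cl_hom; split.
- exact: Cl_hom_pure.
- exact: Cl_hom_inj.
- exact: Cl_hom_surj.
- exact: Cl_hom_id.
- exact: Cl_hom_comp.
Qed.
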